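(* Let $I$ be a set, $P_i$ ($i\in I$) pastures, and $\prod_{i\in I}P_i$ with projections $\pi_j$ as in the context. If $P'$ is a pasture and $f_i:P'\to P_i$ is a morphism for each $i\in I$, then there is a unique morphism $f_*:P'\to\prod_{i\in I}P_i$ such that $\pi_j\circ f_*=f_j$ for each $j\in I$.
   Context: A pasture is a multiplicative monoid $P$ with a zero element $0$ (absorbing) such that $P^\times=P\setminus\{0\}$ is an abelian group, together with an involution $x\mapsto -x$ fixing $0$, and a subset $N_P\subseteq P^3$ (write $a+b+c=0$ for $(a,b,c)\in N_P$) such that: (1) $N_P$ is invariant under permutations; (2) if $a+b+c=0$ then $da+db+dc=0$ for all $d\in P$; (3) $a+b+0=0$ iff $a=-b$. A morphism of pastures is a multiplicative map $f$ with $f(0)=0$, $f(1)=1$, $f(-a)=-f(a)$, preserving nullsets. The product: $\prod_{i\in I}P_i=\{0\}\cup\prod_{i\in I}P_i^\times$ (with $0=(0)_{i\in I}$), $0$ absorbing, coordinatewise multiplication and involution on nonzero elements, nullset $(a_i)+(b_i)+(c_i)=0$ iff $a_i+b_i+c_i=0$ in $P_i$ for all $i$. Projections $\pi_j((x_i)_{i\in I})=x_j$. *)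

From Stdlib Require Import Logic.FunctionalExtensionality.

Set Implicit Arguments.
Set Universe Polymorphism.
Set Polymorphic Inductive Cumulativity.

Record pdata := PData {
  car : Type;
  pzero : car;
  pone : car;
  pmul : car -> car -> car;
  pneg : car -> car;
  pnull : car -> car -> car -> Prop  (* pnull a b c  means  a + b + c = 0 *)
}.

Record Pasture := {
  pd :> pdata;
  mulA : forall x y z : car pd, pmul pd x (pmul pd y z) = pmul pd (pmul pd x y) z;
  mulC : forall x y : car pd, pmul pd x y = pmul pd y x;
  mul1 : forall x : car pd, pmul pd (pone pd) x = x;
  mul0 : forall x : car pd, pmul pd (pzero pd) x = pzero pd;
  one_neq0 : pone pd <> pzero pd;
  mul_nz : forall x y : car pd, x <> pzero pd -> y <> pzero pd -> pmul pd x y <> pzero pd;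
  inv_ex : forall x : car pd, x <> pzero pd -> exists y, pmul pd x y = pone pd;
  neg_invol : forall x : car pd, pneg pd (pneg pd x) = x;
  neg0 : pneg pd (pzero pd) = pzero pd;
  null_perm12 : forall a b c : car pd, pnull pd a b c -> pnull pd b a c;
  null_perm23 : forall a b c : car pd, pnull pd a b c -> pnull pd a c b;
  null_scal : forall a b c d : car pd, pnull pd a b c ->
      pnull pd (pmul pd d a) (pmul pd d b) (pmul pd d c);
  null_zero : forall a b : car pd, pnull pd a b (pzero pd) <-> a = pneg pd b
}.

Definition is_morphism (A B : pdata) (f : car A -> car B) : Prop :=
  f (pzero A) = pzero B /\ f (pone A) = pone B /\
  (forall x y, f (pmul A x y) = pmul B (f x) (f y)) /\
  (forall x, f (pneg A x) = pneg B (f x)) /\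
  (forall a b c, pnull A a b c -> pnull B (f a) (f b) (f c)).

Definition nz (P : Pasture) := { x : car P | x <> pzero P }.

Section Product.
Variables (I : Type) (P : I -> Pasture).

(* Carrier: {0} ∪ ∏ P_i^x, with None playing the role of 0. *)
Definition prod_car := option (forall i, nz (P i)).

Definition prod_mul (x y : prod_car) : prod_car :=
  match x, y with
  | Some u, Some v =>
      Some (fun i => exist _ (pmul (P i) (proj1_sig (u i)) (proj1_sig (v i)))
                       (@mul_nz (P i) _ _ (proj2_sig (u i)) (proj2_sig (v i))))
  | _, _ => None
  end.

Lemma neg_nz (Q : Pasture) (x : car Q) : x <> pzero Q -> pneg Q x <> pzero Q.
Proof.
  intros Hx H; apply Hx; rewrite <- (neg_invol Q x), H; apply neg0.
Qed.

Definition prod_neg (x : prod_car) : prod_car :=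
  match x with
  | Some u => Some (fun i => exist _ (pneg (P i) (proj1_sig (u i))) (@neg_nz (P i) _ (proj2_sig (u i))))
  | None => None
  end.

Definition prod_one : prod_car :=
  Some (fun i => exist _ (pone (P i)) (one_neq0 (P i))).

Definition proj (j : I) (x : prod_car) : car (P j) :=
  match x with
  | Some u => proj1_sig (u j)
  | None => pzero (P j)
  end.

Definition prod_null (a b c : prod_car) : Prop :=
  forall i, pnull (P i) (proj i a) (proj i b) (proj i c).

Definition prod_pdata : pdata :=
  @PData prod_car None prod_one prod_mul prod_neg prod_null.

End Product.

From Stdlib Require Import ClassicalEpsilon ProofIrrelevance FunctionalExtensionality.

Set Implicit Arguments.
Unset Strict Implicit.
Set Universe Polymorphism.

(* An element of the product is [0] or a family of nonzero elements, so a map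
   into it is determined by its zero set and its projections. A morphism of
   pastures sends a nonzero element, which is a unit, to a nonzero element;
   hence every morphism [P' -> prod P] has zero set [{0}], and the only
   candidate is the pairing of the [f_i] on nonzero elements. It is a
   morphism because the operations and the nullset of the product are
   coordinatewise. *)

Lemma mul_eq0 (Q : Pasture) (x y : car Q) :
  pmul Q x y = pzero Q <-> x = pzero Q \/ y = pzero Q.
Proof.
  split.
  - intros Hxy. destruct (excluded_middle_informative (x = pzero Q)) as [Hx|Hx];
      [now left|].
    destruct (excluded_middle_informative (y = pzero Q)) as [Hy|Hy]; [now right|].
    contradiction (mul_nz Q Hx Hy).
  - intros [-> | ->]; [|rewrite mulC]; apply mul0.
Qed.

Lemma neg_eq0 (Q : Pasture) (x : car Q) : pneg Q x = pzero Q <-> x = pzero Q.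
Proof.
  split.
  - intros Hx. rewrite <- (neg_invol Q x), Hx. apply neg0.
  - intros ->. apply neg0.
Qed.

Lemma morphism_neq0 (A : Pasture) (B : pdata) (h : car A -> car B) :
  is_morphism A B h -> pone B <> pzero B ->
  (forall y, pmul B (pzero B) y = pzero B) ->
  forall x, x <> pzero A -> h x <> pzero B.
Proof.
  intros [_ [h1 [hmul _]]] oneB_neq0 mul0B x Hx hx0.
  destruct (inv_ex A Hx) as [y Hxy].
  apply oneB_neq0. rewrite <- h1, <- Hxy, hmul, hx0. apply mul0B.
Qed.

Section ProductStructure.
Variables (I : Type) (P : I -> Pasture).

(* The zero-set hypothesis matters: for empty [I] the projections see nothing. *)
Lemma prod_eq (x y : prod_car P) :
  (x = None <-> y = None) -> (forall i, proj i x = proj i y) -> x = y.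
Proof.
  destruct x as [u|], y as [v|]; intros Hzero Hproj.
  - f_equal. apply functional_extensionality_dep. intros i.
    specialize (Hproj i). simpl in Hproj.
    destruct (u i) as [a Ha], (v i) as [b Hb]. simpl in Hproj. subst b.
    f_equal. apply proof_irrelevance.
  - now apply Hzero.
  - symmetry. now apply Hzero.
  - reflexivity.
Qed.

Lemma proj_one (i : I) : proj i (prod_one P) = pone (P i).
Proof. reflexivity. Qed.

Lemma proj_mul (i : I) (x y : prod_car P) :
  proj i (prod_mul x y) = pmul (P i) (proj i x) (proj i y).
Proof.
  destruct x, y; simpl; try reflexivity; symmetry;
    [rewrite mulC|..]; apply mul0.
Qed.

Lemma proj_neg (i : I) (x : prod_car P) : proj i (prod_neg x) = pneg (P i) (proj i x).
Proof. destruct x; simpl; [reflexivity | symmetry; apply neg0]. Qed.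

Lemma prod_mul_eq0 (x y : prod_car P) :
  prod_mul x y = None <-> x = None \/ y = None.
Proof. destruct x, y; simpl; intuition discriminate. Qed.

Lemma prod_neg_eq0 (x : prod_car P) : prod_neg x = None <-> x = None.
Proof. destruct x; simpl; intuition discriminate. Qed.

End ProductStructure.

Section Pairing.
Variables (I : Type) (P : I -> Pasture) (P' : Pasture)
  (f : forall i : I, car P' -> car (P i))
  (hf : forall i : I, is_morphism P' (P i) (f i)).

Lemma is_morphism_into_prod (g : car P' -> prod_car P) :
  (forall x, g x = None <-> x = pzero P') ->
  (forall j x, proj j (g x) = f j x) ->
  is_morphism P' (prod_pdata P) g.
Proof.
  intros g_eq0 proj_g.
  repeat split; simpl.
  - now apply g_eq0.
  - apply prod_eq.
    + rewrite g_eq0. split; [intros E; contradiction (one_neq0 P' E) | discriminate].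
    + intros i. rewrite proj_g, proj_one. apply (hf i).
  - intros x y. apply prod_eq.
    + rewrite prod_mul_eq0, !g_eq0. apply mul_eq0.
    + intros i. rewrite proj_mul, !proj_g. apply (hf i).
  - intros x. apply prod_eq.
    + rewrite prod_neg_eq0, !g_eq0. apply neg_eq0.
    + intros i. rewrite proj_neg, !proj_g. apply (hf i).
  - intros a b c Habc i. rewrite !proj_g. now apply (hf i).
Qed.

Definition prod_tuple (x : car P') : prod_car P :=
  match excluded_middle_informative (x = pzero P') with
  | left _ => None
  | right Hx => Some (fun i => exist _ (f i x)
      (morphism_neq0 (hf i) (one_neq0 (P i)) (mul0 (P i)) Hx))
  end.

Lemma prod_tuple_eq0 (x : car P') : prod_tuple x = None <-> x = pzero P'.
Proof.
  unfold prod_tuple.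
  destruct (excluded_middle_informative (x = pzero P')) as [Hx|Hx].
  - now split.
  - split; [discriminate | intros E; contradiction (Hx E)].
Qed.

Lemma proj_prod_tuple (j : I) (x : car P') : proj j (prod_tuple x) = f j x.
Proof.
  unfold prod_tuple.
  destruct (excluded_middle_informative (x = pzero P')) as [->|]; [|reflexivity].
  symmetry. apply (hf j).
Qed.

End Pairing.

Lemma morphism_into_prod_eq0 (I : Type) (P : I -> Pasture) (P' : Pasture)
  (g : car P' -> prod_car P) :
  is_morphism P' (prod_pdata P) g -> forall x, g x = None <-> x = pzero P'.
Proof.
  intros Hg x. split.
  - intros Hx. destruct (excluded_middle_informative (x = pzero P')) as [|Hx0];
      [assumption|].
    contradiction (morphism_neq0 Hg ltac:(discriminate) (fun _ => eq_refl) Hx0).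
  - intros ->. apply Hg.
Qed.

Theorem lemma6p4 (I : Type) (P : I -> Pasture) (P' : Pasture)
  (f : forall i : I, car P' -> car (P i))
  (hf : forall i : I, is_morphism P' (P i) (f i)) :
  exists! g : car P' -> car (prod_pdata P),
    is_morphism P' (prod_pdata P) g /\
    (forall j : I, forall x : car P', @proj I P j (g x) = f j x).
Proof.
  exists (prod_tuple hf). split; [split|].
  - apply (is_morphism_into_prod hf); [apply prod_tuple_eq0 | apply proj_prod_tuple].
  - apply proj_prod_tuple.
  - intros g [Hg proj_g]. apply functional_extensionality. intros x.
    apply prod_eq.
    + rewrite prod_tuple_eq0, (morphism_into_prod_eq0 Hg). reflexivity.
    + intros i. rewrite proj_prod_tuple, proj_g. reflexivity.
Qed.
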